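(* Let $n\ge1$, $\gamma,\delta\in(0,1]$ and $c>0$. Set $j:=\lceil1/\gamma\rceil$, $\theta:=j-1/\gamma\in[0,1)$, and $$\omega_\star:=\delta^{\frac{1+\theta}{2(\theta+2/\gamma)}},\qquad R_\star:=\Big(\frac{\delta^{\frac{1+\theta}{2}}}{c^jc_{n,j}}\Big)^{\frac{1}{2j}},$$ where $c_{n,j}>0$ is a constant depending only on $n,j$ with the property stated in the context. Assume $\varphi:[0,R_\star]\to\mathbb{R}$ satisfies $$r^{1-n}(r^{n-1}\varphi')'=\frac{c\,\omega_\star}{\delta}\varphi^{1+\gamma}\ \text{ in }(0,R_\star),\qquad\varphi(0)=1,\qquad\varphi'(0)=0.$$ Then $(\omega_\star\delta)^{1/\gamma}\varphi(R_\star)\ge\delta$.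
   Context: Property of $c_{n,k}$ ($k=1,2,\dots$): for all $\lambda,R>0$, $\alpha>1$ and every nonnegative solution $\phi:[0,R]\to\mathbb{R}$ of $r^{1-n}(r^{n-1}\phi')'=\lambda\phi^\alpha$ in $(0,R)$, $\phi(0)=1$, $\phi'(0)=0$, one has $\phi(r)\ge c_{n,k}\lambda^kr^{2k}$ for all $r\in(0,R)$ (such constants, depending only on $n,k$, exist). Here $c_{n,j}$ is this constant with $k=j$. *)

From Stdlib Require Import Reals Lra.
From Coquelicot Require Import Coquelicot.
Open Scope R_scope.

(* Real power x^a for x >= 0 (0^a = 0 for a > 0); value 0 for x <= 0
   (only nonnegative arguments are mathematically meaningful). *)
Definition rpow (x a : R) : R := if Rlt_dec 0 x then exp (a * ln x) else 0.

Definition radial_solution (n : nat) (lam alpha Rad : R) (phi : R -> R) : Prop :=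
  exists dphi : R -> R,
    (forall r, 0 < r < Rad -> is_derive phi r (dphi r)) /\
    (forall r, 0 < r < Rad ->
       exists D, is_derive (fun s => s ^ (n - 1) * dphi s) r D /\
                 / r ^ (n - 1) * D = lam * rpow (phi r) alpha) /\
    phi 0 = 1 /\
    filterlim (fun h => (phi h - phi 0) / h) (at_right 0) (locally 0) /\
    filterlim phi (at_left Rad) (locally (phi Rad)).

Definition cnk_property (n k : nat) (C : R) : Prop :=
  forall (lam Rad alpha : R) (phi : R -> R),
    0 < lam -> 0 < Rad -> 1 < alpha ->
    (forall r, 0 <= r <= Rad -> 0 <= phi r) ->
    radial_solution n lam alpha Rad phi ->
    forall r, 0 < r < Rad -> phi r >= C * lam ^ k * r ^ (2 * k).

From Stdlib Require Import Reals Lra Lia.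
From Coquelicot Require Import Coquelicot.
Open Scope R_scope.

(* The right-hand side of the equation is nonnegative, so the flux r^(n-1) φ'
   is nondecreasing; together with φ'(0) = 0 this forces φ' >= 0, hence φ >= 1.
   The defining property of c_{n,j} then applies with λ = c ω⋆ / δ and, by
   continuity at R⋆, gives φ(R⋆) >= c_{n,j} λ^j R⋆^(2j) = ω⋆^j δ^((1+θ)/2 - j).
   Writing ω⋆ = δ^a with a (θ + 2/γ) = (1+θ)/2 and θ = j - 1/γ, the product
   (ω⋆ δ)^(1/γ) ω⋆^j δ^((1+θ)/2 - j) is exactly δ. *)

Lemma at_right_of_interval (P : R -> Prop) (a b : R) :
  a < b -> (forall h, a < h < b -> P h) -> at_right a P.
Proof.
  intros Hab HP. exists (mkposreal (b - a) ltac:(lra)).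
  intros h Hh Hah. apply HP.
  unfold ball in Hh; simpl in Hh; unfold AbsRing_ball, abs, minus, plus, opp in Hh; simpl in Hh.
  apply Rabs_def2 in Hh. lra.
Qed.

Lemma at_left_of_interval (P : R -> Prop) (a b : R) :
  a < b -> (forall h, a < h < b -> P h) -> at_left b P.
Proof.
  intros Hab HP. exists (mkposreal (b - a) ltac:(lra)).
  intros h Hh Hhb. apply HP.
  unfold ball in Hh; simpl in Hh; unfold AbsRing_ball, abs, minus, plus, opp in Hh; simpl in Hh.
  apply Rabs_def2 in Hh. lra.
Qed.

Lemma filterlim_Rplus {T : Type} {F : (T -> Prop) -> Prop} {FF : Filter F}
  (f g : T -> R) (a b : R) :
  filterlim f F (locally a) -> filterlim g F (locally b) ->
  filterlim (fun x => f x + g x) F (locally (a + b)).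
Proof. intros Hf Hg. exact (filterlim_comp_2 f g Rplus Hf Hg (filterlim_plus a b)). Qed.

Lemma filterlim_Rmult {T : Type} {F : (T -> Prop) -> Prop} {FF : Filter F}
  (f g : T -> R) (a b : R) :
  filterlim f F (locally a) -> filterlim g F (locally b) ->
  filterlim (fun x => f x * g x) F (locally (a * b)).
Proof. intros Hf Hg. exact (filterlim_comp_2 f g Rmult Hf Hg (filterlim_mult a b)). Qed.

Lemma nondecreasing_of_derive_nonneg (g : R -> R) (a b : R) :
  (forall r, a < r < b -> exists D, is_derive g r D /\ 0 <= D) ->
  forall x y, a < x -> x <= y -> y < b -> g x <= g y.
Proof.
  intros Hg x y Hx Hxy Hy.
  assert (Hder : forall r, a < r < b -> is_derive g r (Derive g r) /\ 0 <= Derive g r).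
  { intros r Hr. destruct (Hg r Hr) as [D [HD HD0]].
    rewrite (is_derive_unique _ _ _ HD). split; assumption. }
  destruct (MVT_gen g x y (Derive g)) as [z [Hz Heq]]; rewrite ?Rmin_left, ?Rmax_right in * by lra.
  - intros r Hr. apply Hder. lra.
  - intros r Hr. apply continuity_pt_filterlim, (@ex_derive_continuous R_AbsRing R_NormedModule).
    exists (Derive g r). apply Hder. lra.
  - destruct (Hder z ltac:(lra)). nra.
Qed.

Lemma right_continuous_of_right_slope (f : R -> R) (l : R) :
  filterlim (fun h => (f h - f 0) / h) (at_right 0) (locally l) ->
  filterlim f (at_right 0) (locally (f 0)).
Proof.
  intros Hslope.
  assert (Hid : filterlim (fun h : R => h) (at_right 0) (locally 0)).
  { apply (filterlim_filter_le_1 _ (filter_le_within _)), filterlim_id. }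
  pose proof (filterlim_Rplus _ _ _ _ (filterlim_const (f 0))
                (filterlim_Rmult _ _ _ _ Hid Hslope)) as H.
  rewrite Rmult_0_l, Rplus_0_r in H.
  refine (filterlim_ext_loc _ f _ H).
  exists (mkposreal 1 Rlt_0_1). intros h _ Hh. field. lra.
Qed.

Lemma right_slope_le (f df : R -> R) (b l m : R) :
  0 < b ->
  (forall r, 0 < r < b -> is_derive f r (df r)) ->
  (forall r, 0 < r < b -> df r <= m) ->
  filterlim (fun h => (f h - f 0) / h) (at_right 0) (locally l) ->
  l <= m.
Proof.
  intros Hb Hf Hdf Hslope.
  assert (Hdecr : forall h r, 0 < h -> h <= r -> r < b -> m * h - f h <= m * r - f r).
  { apply nondecreasing_of_derive_nonneg. intros r Hr. exists (m - df r). split.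
    - apply (is_derive_minus (fun s => m * s) f).
      + auto_derive; [exact I | ring].
      + apply Hf. exact Hr.
    - specialize (Hdf r Hr). lra. }
  assert (Hchord : forall r, 0 < r < b -> f r - f 0 <= m * r).
  { intros r Hr.
    assert (Hlim : filterlim (fun h => m * h - f h) (at_right 0) (locally (m * 0 - f 0))).
    { apply filterlim_Rplus.
      - apply filterlim_Rmult; [apply filterlim_const|].
        apply (filterlim_filter_le_1 _ (filter_le_within _)), filterlim_id.
      - eapply filterlim_comp;
          [exact (right_continuous_of_right_slope f l Hslope) | exact (filterlim_opp (f 0))]. }
    assert (H : Rbar_le (m * 0 - f 0) (m * r - f r)).
    { apply (filterlim_le (F := at_right 0)
               (fun h => m * h - f h) (fun _ => m * r - f r));
        [|exact Hlim | exact (filterlim_const (m * r - f r))].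
      apply (at_right_of_interval _ 0 r); [lra|].
      intros h Hh. apply Hdecr; lra. }
    simpl in H. lra. }
  apply (filterlim_le (F := at_right 0) (fun h => (f h - f 0) / h) (fun _ => m) l m);
    [|exact Hslope | exact (filterlim_const m)].
  apply (at_right_of_interval _ 0 b Hb). intros h Hh.
  apply Rle_div_l; [lra|]. apply Hchord. exact Hh.
Qed.

Lemma le_at_left_endpoint (f g : R -> R) (a b : R) :
  a < b -> (forall r, a < r < b -> g r <= f r) ->
  continuous g b -> filterlim f (at_left b) (locally (f b)) ->
  g b <= f b.
Proof.
  intros Hab Hgf Hg Hf.
  apply (filterlim_le (F := at_left b) g f (g b) (f b)).
  - exact (at_left_of_interval _ a b Hab Hgf).
  - exact (filterlim_filter_le_1 _ (filter_le_within _) Hg).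
  - exact Hf.
Qed.

Lemma rpow_ge0 (x a : R) : 0 <= rpow x a.
Proof. unfold rpow. destruct (Rlt_dec 0 x); [left; apply exp_pos | lra]. Qed.

Section RadialSolution.

Variables (n : nat) (lam alpha Rad : R) (phi dphi : R -> R).
Hypothesis lam_ge0 : 0 <= lam.
Hypothesis phi_derive : forall r, 0 < r < Rad -> is_derive phi r (dphi r).
Hypothesis flux_derive : forall r, 0 < r < Rad ->
  exists D, is_derive (fun s => s ^ (n - 1) * dphi s) r D /\
            / r ^ (n - 1) * D = lam * rpow (phi r) alpha.
Hypothesis phi_0 : phi 0 = 1.
Hypothesis right_slope_0 :
  filterlim (fun h => (phi h - phi 0) / h) (at_right 0) (locally 0).

Lemma flux_nondecreasing (x y : R) :
  0 < x -> x <= y -> y < Rad -> x ^ (n - 1) * dphi x <= y ^ (n - 1) * dphi y.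
Proof.
  apply (nondecreasing_of_derive_nonneg (fun s => s ^ (n - 1) * dphi s)).
  intros r Hr. destruct (flux_derive r Hr) as [D [HD Heq]].
  exists D. split; [exact HD|].
  assert (Hpow : 0 < r ^ (n - 1)) by (apply pow_lt; lra).
  replace D with (r ^ (n - 1) * (lam * rpow (phi r) alpha))
    by (rewrite <- Heq; field; lra).
  pose proof (rpow_ge0 (phi r) alpha). apply Rmult_le_pos; [lra | nra].
Qed.

Lemma dphi_ge0 (r : R) : 0 < r < Rad -> 0 <= dphi r.
Proof.
  intros Hr. destruct (Rle_lt_dec 0 (dphi r)) as [|Hneg]; [assumption|].
  apply (right_slope_le phi dphi r 0 (dphi r));
    [lra | intros s Hs; apply phi_derive; lra | intros s Hs | exact right_slope_0].
  pose proof (flux_nondecreasing s r ltac:(lra) ltac:(lra) ltac:(lra)).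
  assert (0 < s ^ (n - 1)) by (apply pow_lt; lra).
  assert (s ^ (n - 1) <= r ^ (n - 1)) by (apply pow_incr; lra).
  nra.
Qed.

Lemma phi_ge1 (r : R) : 0 < r < Rad -> 1 <= phi r.
Proof.
  intros Hr.
  assert (Hmono : forall h, 0 < h < r -> phi h <= phi r).
  { intros h Hh. apply (nondecreasing_of_derive_nonneg phi 0 Rad); try lra.
    intros s Hs. exists (dphi s). split; [apply phi_derive | apply dphi_ge0]; exact Hs. }
  rewrite <- phi_0.
  apply (filterlim_le (F := at_right 0) phi (fun _ => phi r) (phi 0) (phi r)).
  - exact (at_right_of_interval _ 0 r ltac:(lra) Hmono).
  - exact (right_continuous_of_right_slope phi 0 right_slope_0).
  - exact (filterlim_const (phi r)).
Qed.

End RadialSolution.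

Lemma radial_solution_le_endpoint (n : nat) (lam alpha Rad : R) (phi g : R -> R) :
  0 < Rad -> radial_solution n lam alpha Rad phi ->
  (forall r, 0 < r < Rad -> g r <= phi r) -> continuous g Rad -> g Rad <= phi Rad.
Proof.
  intros HRad (dphi & _ & _ & _ & _ & Hleft) Hgphi Hg.
  exact (le_at_left_endpoint phi g 0 Rad HRad Hgphi Hg Hleft).
Qed.

Lemma radial_solution_nonneg (n : nat) (lam alpha Rad : R) (phi : R -> R) :
  0 <= lam -> radial_solution n lam alpha Rad phi ->
  forall r, 0 <= r <= Rad -> 0 <= phi r.
Proof.
  intros Hlam Hsol r Hr.
  pose proof Hsol as (dphi & Hd & Hflux & H0 & Hslope & _).
  pose proof (phi_ge1 n lam alpha Rad phi dphi Hlam Hd Hflux H0 Hslope) as Hge1.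
  destruct (Req_dec r 0) as [->|Hr0]; [lra|].
  destruct (Rlt_dec r Rad) as [HrRad|HrRad]; [pose proof (Hge1 r ltac:(lra)); lra|].
  replace r with Rad by lra.
  apply Rle_trans with 1; [lra|].
  apply (radial_solution_le_endpoint n lam alpha Rad phi (fun _ => 1));
    [lra | exact Hsol | exact Hge1 | apply continuous_const].
Qed.

Lemma pow_Rpower_inv (x : R) (k : nat) :
  0 < x -> (0 < k)%nat -> Rpower x (1 / INR k) ^ k = x.
Proof.
  intros Hx Hk.
  rewrite <- Rpower_pow by (unfold Rpower; apply exp_pos).
  rewrite Rpower_mult.
  replace (1 / INR k * INR k) with 1 by (field; apply not_0_INR; lia).
  apply Rpower_1. exact Hx.
Qed.

Lemma scaling_identity (gamma delta c cnj : R) (j : nat) :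
  0 < gamma -> 0 < delta -> 0 < c -> 0 < cnj -> (0 < j)%nat ->
  let theta := INR j - 1 / gamma in
  let omega := Rpower delta ((1 + theta) / (2 * (theta + 2 / gamma))) in
  let Rstar := Rpower (Rpower delta ((1 + theta) / 2) / (c ^ j * cnj)) (1 / (2 * INR j)) in
  Rpower (omega * delta) (1 / gamma) * (cnj * (c * omega / delta) ^ j * Rstar ^ (2 * j))
  = delta.
Proof.
  intros Hgamma Hdelta Hc Hcnj Hj theta omega Rstar.
  set (a := (1 + theta) / (2 * (theta + 2 / gamma))).
  set (b := (1 + theta) / 2).
  assert (Hcj : 0 < c ^ j) by (apply pow_lt; lra).
  assert (Hj' : 0 < INR j) by (apply lt_0_INR; lia).
  assert (HRstar : Rstar ^ (2 * j) = Rpower delta b / (c ^ j * cnj)).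
  { unfold Rstar. replace (2 * INR j) with (INR (2 * j)) by (rewrite mult_INR; simpl; ring).
    apply pow_Rpower_inv; [|lia].
    apply Rdiv_lt_0_compat; [unfold Rpower; apply exp_pos | nra]. }
  assert (Homega_delta : omega * delta = Rpower delta (a + 1))
    by (rewrite Rpower_plus, Rpower_1; [reflexivity | exact Hdelta]).
  assert (Homega_j : omega ^ j = Rpower delta (a * INR j))
    by (rewrite <- Rpower_mult, Rpower_pow; [reflexivity | unfold Rpower; apply exp_pos]).
  assert (Hdelta_j : delta ^ j = Rpower delta (INR j)) by (rewrite Rpower_pow; auto).
  assert (Hexponent : (a + 1) * (1 / gamma) + (a * INR j + b + - INR j) = 1).
  { unfold a, b, theta. field. split; [lra | nra]. }
  rewrite HRstar, Homega_delta.
  replace (cnj * (c * omega / delta) ^ j * (Rpower delta b / (c ^ j * cnj)))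
    with (Rpower delta (a * INR j) * Rpower delta b / Rpower delta (INR j)).
  2: { unfold Rdiv. rewrite !Rpow_mult_distr, pow_inv, <- Homega_j, <- Hdelta_j.
       field. repeat split; [lra | lra | apply pow_nonzero; lra]. }
  unfold Rdiv in Hexponent |- *.
  rewrite <- Rpower_Ropp, Rpower_mult, <- !Rpower_plus, Hexponent.
  apply Rpower_1. exact Hdelta.
Qed.

Theorem lemma4p7 (n : nat) (gamma delta c : R) (j : nat) (cnj : R) (phi : R -> R) :
  (1 <= n)%nat ->
  0 < gamma <= 1 -> 0 < delta <= 1 -> 0 < c ->
  (* j = ceil(1/gamma) *)
  INR j - 1 < 1 / gamma <= INR j ->
  0 < cnj -> cnk_property n j cnj ->
  let theta := INR j - 1 / gamma in
  let omega := Rpower delta ((1 + theta) / (2 * (theta + 2 / gamma))) in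
  let Rstar := Rpower (Rpower delta ((1 + theta) / 2) / (c ^ j * cnj)) (1 / (2 * INR j)) in
  radial_solution n (c * omega / delta) (1 + gamma) Rstar phi ->
  Rpower (omega * delta) (1 / gamma) * phi Rstar >= delta.
Proof.
  intros _ Hgamma Hdelta Hc Hj Hcnj Hcnk theta omega Rstar Hsol.
  set (lam := c * omega / delta).
  assert (Hj0 : (0 < j)%nat).
  { apply INR_lt. simpl. assert (0 < 1 / gamma) by (apply Rdiv_lt_0_compat; lra). lra. }
  assert (Homega : 0 < omega) by (unfold omega, Rpower; apply exp_pos).
  assert (Hlam : 0 < lam) by (apply Rdiv_lt_0_compat; [apply Rmult_lt_0_compat|]; lra).
  assert (HRstar : 0 < Rstar) by (unfold Rstar, Rpower; apply exp_pos).
  assert (Hbound : cnj * lam ^ j * Rstar ^ (2 * j) <= phi Rstar).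
  { apply (radial_solution_le_endpoint n lam (1 + gamma) Rstar phi
             (fun r => cnj * lam ^ j * r ^ (2 * j))); [exact HRstar | exact Hsol | |].
    - intros r Hr. apply Rge_le, (Hcnk lam Rstar (1 + gamma) phi Hlam HRstar);
        [lra | | exact Hsol | exact Hr].
      exact (radial_solution_nonneg n lam (1 + gamma) Rstar phi (Rlt_le _ _ Hlam) Hsol).
    - apply (@ex_derive_continuous R_AbsRing R_NormedModule). auto_derive. exact I. }
  assert (Hscale :
    Rpower (omega * delta) (1 / gamma) * (cnj * lam ^ j * Rstar ^ (2 * j)) = delta)
    by exact (scaling_identity gamma delta c cnj j ltac:(lra) ltac:(lra) Hc Hcnj Hj0).
  apply Rle_ge. rewrite <- Hscale at 1.
  apply Rmult_le_compat_l; [left; unfold Rpower; apply exp_pos | exact Hbound].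
Qed.
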